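(* Let $\alpha\in(0,2]$. For integers $n_1,n_2\ge 1$, with $n=n_1+n_2$, define $$f_{\{n_1\}\{n_2\}}=\max_{|\phi_a\rangle,|\phi_b\rangle}\ \operatorname{Tr}\Big[\big(\alpha\mathcal{M}^{(n)}_Z+\mathcal{M}^{(n)}_X\big)\,|\phi_a\rangle\langle\phi_a|\otimes|\phi_b\rangle\langle\phi_b|\Big],$$ where the maximum is over unit vectors $|\phi_a\rangle\in(\mathbb{C}^2)^{\otimes n_1}$ and $|\phi_b\rangle\in(\mathbb{C}^2)^{\otimes n_2}$, and $\mathcal{M}^{(n)}_Z=(|0\rangle\langle 0|)^{\otimes n}+(|1\rangle\langle 1|)^{\otimes n}$, $\mathcal{M}^{(n)}_X=\sigma_x^{\otimes n}$ with $\sigma_x=|0\rangle\langle 1|+|1\rangle\langle 0|$. Then for all $n_1,n_2\ge 1$, $$f_{\{n_1\}\{n_2\}}=f_{\{n_1\}\{1\}}.$$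
   Context: $\{|0\rangle,|1\rangle\}$ is the computational basis of $\mathbb{C}^2$; $f_{\{n_1\}\{1\}}$ is the same quantity defined with $n_2=1$ (so on $n_1+1$ qubits). *)

From HB Require Import structures.
From mathcomp Require Import all_boot all_order all_algebra.
From mathcomp Require Import complex mxtens.
From mathcomp Require Import classical_sets reals.

Set Implicit Arguments.
Unset Strict Implicit.
Unset Printing Implicit Defensive.

Import Order.TTheory GRing.Theory Num.Theory.
Local Open Scope ring_scope.
Local Open Scope complex_scope.

Section Qubits.
Variable R : realType.
Local Notation C := (R[i]).

Definition ket0 : 'I_2 := ord0.
Definition ket1 : 'I_2 := ord_max.

Definition proj0 : 'M[C]_2 := delta_mx ket0 ket0.
Definition proj1 : 'M[C]_2 := delta_mx ket1 ket1.
Definition sigma_x : 'M[C]_2 := delta_mx ket0 ket1 + delta_mx ket1 ket0.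

Fixpoint tpow (A : 'M[C]_2) (n : nat) : 'M[C]_(2 ^ n) :=
  match n return 'M[C]_(2 ^ n) with
  | 0 => castmx (esym (expn0 2), esym (expn0 2)) (1%:M : 'M[C]_1)
  | n'.+1 => castmx (esym (expnS 2 n'), esym (expnS 2 n')) (A *t tpow A n')
  end.

Definition MZ (n : nat) : 'M[C]_(2 ^ n) := tpow proj0 n + tpow proj1 n.
Definition MX (n : nat) : 'M[C]_(2 ^ n) := tpow sigma_x n.

Definition adj {m n : nat} (A : 'M[C]_(m, n)) : 'M[C]_(n, m) :=
  (map_mx (@conjc R) A)^T.

Definition unit_vec {m : nat} (v : 'cV[C]_m) : Prop := adj v *m v = 1%:M.

Lemma expnD_2 (n1 n2 : nat) : (2 ^ (n1 + n2) = 2 ^ n1 * 2 ^ n2)%N.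
Proof. exact: expnD. Qed.

(* Tr[(alpha M_Z^(n) + M_X^(n)) |a><a| (x) |b><b|], n = n1 + n2,
   with (C^2)^{(x)(n1+n2)} identified with (C^2)^{(x)n1} (x) (C^2)^{(x)n2} *)
Definition objective (alpha : R) (n1 n2 : nat)
    (a : 'cV[C]_(2 ^ n1)) (b : 'cV[C]_(2 ^ n2)) : C :=
  \tr (castmx (expnD_2 n1 n2, expnD_2 n1 n2)
             (alpha%:C *: MZ (n1 + n2) + MX (n1 + n2))
       *m ((a *m adj a) *t (b *m adj b))).

(* f_{{n1}{n2}}: the maximum (here: supremum, which is attained by
   compactness) over unit vectors of the (real) objective value *)
Definition f (alpha : R) (n1 n2 : nat) : R :=
  sup [set x : R | exists (a : 'cV[C]_(2 ^ n1)) (b : 'cV[C]_(2 ^ n2)),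
         unit_vec a /\ unit_vec b /\ (x%:C = objective alpha a b)].

End Qubits.

From HB Require Import structures.
From mathcomp Require Import all_boot all_order all_algebra.
From mathcomp Require Import complex mxtens.
From mathcomp Require Import classical_sets reals.
From mathcomp Require Import zify ring lra.
Import Order.TTheory GRing.Theory Num.Theory.

Set Implicit Arguments.
Unset Strict Implicit.
Unset Printing Implicit Defensive.

(* The objective only depends on three statistics of the second factor |b>:
   the weights P = |b_{0..0}|^2 and Q = |b_{1..1}|^2, and X = <b|sigma_x^(x)n|b>,
   because (|0><0|)^(x)n, (|1><1|)^(x)n and sigma_x^(x)n split along
   (C^2)^(x)(n1+n2) = (C^2)^(x)n1 (x) (C^2)^(x)n2.  The amplitudes of |b> on the
   other basis vectors, of total weight r, contribute at most r to |X|, whence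
   X^2 <= 4 (P + r/2) (Q + r/2).  So the qubit sqrt(P + r/2)|0> +- sqrt(Q + r/2)|1>,
   with the sign of X for |a>, does at least as well as |b>.  Conversely, a qubit
   c0|0> + c1|1> gives the same value as c0|0..0> + c1|1..1>.  The two sets of
   values thus have the same down-closure, hence the same supremum. *)

(* [P N i j] is the 0/1 pattern of an N x N matrix, indexed as in [mxtens]. *)
Definition kron_pattern (P : nat -> nat -> nat -> bool) :=
  forall N1 N2 i1 j1 i2 j2,
    i1 < N1 -> j1 < N1 -> i2 < N2 -> j2 < N2 ->
    P (N1 * N2) (i1 * N2 + i2) (j1 * N2 + j2) = P N1 i1 j1 && P N2 i2 j2.

Lemma mixed_radix_first N2 i1 i2 : i2 < N2 ->
  (i1 * N2 + i2 == 0) = (i1 == 0) && (i2 == 0).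
Proof.
by move=> lt2; rewrite addn_eq0 muln_eq0 (gtn_eqF (leq_ltn_trans (leq0n i2) lt2)) orbF.
Qed.

Lemma kron_pattern_zeros : kron_pattern (fun _ i j => (i == 0) && (j == 0)).
Proof.
move=> N1 N2 i1 j1 i2 j2 *; rewrite !mixed_radix_first //.
by case: (i1 == _); case: (i2 == _); case: (j1 == _); case: (j2 == _).
Qed.

Lemma predn_mul N1 N2 : 0 < N1 -> 0 < N2 -> (N1 * N2).-1 = N1.-1 * N2 + N2.-1.
Proof. by move=> *; nia. Qed.

Lemma mixed_radix_last N1 N2 i1 i2 : i1 < N1 -> i2 < N2 ->
  (i1 * N2 + i2 == (N1 * N2).-1) = (i1 == N1.-1) && (i2 == N2.-1).
Proof. by move=> *; rewrite predn_mul ?eq_addl_mul ?xpair_eqE //; lia. Qed.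

Lemma kron_pattern_ones : kron_pattern (fun N i j => (i == N.-1) && (j == N.-1)).
Proof.
move=> N1 N2 i1 j1 i2 j2 *; rewrite !mixed_radix_last //.
by case: (i1 == _); case: (i2 == _); case: (j1 == _); case: (j2 == _).
Qed.

Lemma kron_pattern_antidiag : kron_pattern (fun N i j => i + j == N.-1).
Proof.
move=> N1 N2 i1 j1 i2 j2 *; rewrite predn_mul; [|lia|lia].
have [lt2|ge2] := ltnP (i2 + j2) N2.
  have -> : i1 * N2 + i2 + (j1 * N2 + j2) = (i1 + j1) * N2 + (i2 + j2) by ring.
  by rewrite eq_addl_mul ?xpair_eqE //; lia.
have -> : i1 * N2 + i2 + (j1 * N2 + j2) = (i1 + j1).+1 * N2 + (i2 + j2 - N2) by nia.
by rewrite eq_addl_mul ?xpair_eqE; lia.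
Qed.

Lemma expn2_gt0 n : 0 < 2 ^ n. Proof. by rewrite expn_gt0. Qed.

Definition ord_zeros n : 'I_(2 ^ n) := Ordinal (expn2_gt0 n).
Definition ord_ones n : 'I_(2 ^ n) := rev_ord (ord_zeros n).

Lemma ord_ones_neq_zeros n : 0 < n -> ord_ones n != ord_zeros n.
Proof.
move=> n_gt0; rewrite -val_eqE /= subn1.
have : 2 <= 2 ^ n by rewrite -{1}(expn1 2) leq_exp2l.
by lia.
Qed.

Definition inner_index n (i : 'I_(2 ^ n)) := (i != ord_zeros n) && (i != ord_ones n).

Lemma inner_index_rev n (i : 'I_(2 ^ n)) : inner_index (rev_ord i) = inner_index i.
Proof.
rewrite /inner_index /ord_ones -{1}[ord_zeros n]rev_ordK.
by rewrite !(inj_eq rev_ord_inj) andbC.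
Qed.

Local Open Scope ring_scope.
Local Open Scope complex_scope.

Section TensorPowerPattern.
Variables (R : realType) (A : 'M[R[i]]_2) (P : nat -> nat -> nat -> bool).
Hypotheses (P_kron : kron_pattern P) (P_one : P 1%N 0%N 0%N).
Hypothesis A_pattern : forall i j : 'I_2, A i j = (P 2%N i j)%:R.

Lemma tpowE n (i j : 'I_(2 ^ n)) : tpow A n i j = (P (2 ^ n)%N i j)%:R.
Proof.
elim: n i j => [|n IHn] i j.
  by rewrite /= castmxE mxE; case: i j => -[] // ? [] [] //= ?; rewrite P_one.
rewrite /= castmxE.
set k := cast_ord _ i; set l := cast_ord _ j.
rewrite -[nat_of_ord i]/(nat_of_ord k) -[nat_of_ord j]/(nat_of_ord l).
clearbody k l.
case: (mxtens_indexP k) => i1 i2; case: (mxtens_indexP l) => j1 j2.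
by rewrite tensmxE IHn A_pattern -natrM mulnb expnS P_kron.
Qed.

Lemma tpowD n1 n2 :
  castmx (expnD_2 n1 n2, expnD_2 n1 n2) (tpow A (n1 + n2))
  = tpow A n1 *t tpow A n2.
Proof.
apply/matrixP => k l; rewrite castmxE tpowE.
set k' := cast_ord _ k; set l' := cast_ord _ l.
rewrite -[nat_of_ord k']/(nat_of_ord k) -[nat_of_ord l']/(nat_of_ord l).
case: (mxtens_indexP k) => i1 i2; case: (mxtens_indexP l) => j1 j2.
by rewrite tensmxE !tpowE -natrM mulnb /= expnD P_kron.
Qed.

End TensorPowerPattern.

Lemma mxtrace_tens (R : comPzRingType) m n (A : 'M[R]_m) (B : 'M[R]_n) :
  \tr (A *t B) = \tr A * \tr B.
Proof. by rewrite /mxtrace mulr_sum; apply: eq_bigr => k _; rewrite mxE. Qed.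

Lemma sum_delta (T : pzSemiRingType) N (k : 'I_N) (F : 'I_N -> T) :
  \sum_i (i == k)%:R * F i = F k.
Proof.
rewrite (bigD1 k) //= eqxx mul1r big1 ?addr0 // => i /negbTE->.
by rewrite mul0r.
Qed.

Section Qubits.
Variable R : realType.
Local Notation C := R[i].

Lemma proj0E (i j : 'I_2) : proj0 R i j = ((i == 0%N :> nat) && (j == 0%N :> nat))%:R.
Proof. by rewrite mxE; case: i j => -[|[|]] // ? [[|[|]] // ?]. Qed.

Lemma proj1E (i j : 'I_2) : proj1 R i j = ((i == 1%N :> nat) && (j == 1%N :> nat))%:R.
Proof. by rewrite mxE; case: i j => -[|[|]] // ? [[|[|]] // ?]. Qed.

Lemma sigma_xE (i j : 'I_2) : sigma_x R i j = ((i + j)%N == 1%N)%:R.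
Proof. by rewrite !mxE; case: i j => -[|[|]] // ? [[|[|]] // ?]; rewrite /= ?addr0 ?add0r. Qed.

Lemma tpow_proj0 n (i j : 'I_(2 ^ n)) :
  tpow (proj0 R) n i j = (i == ord_zeros n)%:R * (j == ord_zeros n)%:R.
Proof. by rewrite -natrM mulnb -!val_eqE (tpowE kron_pattern_zeros isT (@proj0E)). Qed.

Lemma tpow_proj1 n (i j : 'I_(2 ^ n)) :
  tpow (proj1 R) n i j = (i == ord_ones n)%:R * (j == ord_ones n)%:R.
Proof. by rewrite -natrM mulnb -!val_eqE /= subn1 (tpowE kron_pattern_ones isT (@proj1E)). Qed.

(* [rev_ord i] = 2^n - 1 - i is the bitwise complement of i. *)
Lemma tpow_sigma_x n (i j : 'I_(2 ^ n)) :
  tpow (sigma_x R) n i j = (j == rev_ord i)%:R.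
Proof.
rewrite (tpowE kron_pattern_antidiag isT (@sigma_xE)); congr (_ %:R).
rewrite -val_eqE /=; have := ltn_ord i; have := ltn_ord j.
by move: (2 ^ n)%N (nat_of_ord i) (nat_of_ord j) => N a b *; apply/eqP/eqP; lia.
Qed.

Definition sqnormc (z : C) : R := complex.Re z ^+ 2 + complex.Im z ^+ 2.

Lemma sqnormc_ge0 z : 0 <= sqnormc z.
Proof. by rewrite addr_ge0 ?sqr_ge0. Qed.

Lemma mulcJ z : z * z^* = (sqnormc z)%:C.
Proof.
case: z => a b; rewrite /sqnormc /=; simpc.
by apply/eqP; rewrite eq_complex /=; apply/andP; split; apply/eqP; ring.
Qed.

Definition prob_zeros n (v : 'cV[C]_(2 ^ n)) : R := sqnormc (v (ord_zeros n) 0).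
Definition prob_ones n (v : 'cV[C]_(2 ^ n)) : R := sqnormc (v (ord_ones n) 0).
(* sigma_x^(x)n maps each basis vector to its bitwise complement, [rev_ord]. *)
Definition expX N (v : 'cV[C]_N) : R := \sum_i complex.Re (v (rev_ord i) 0 * (v i 0)^*).

Lemma mxtrace_mul_rank1 N (M : 'M[C]_N) (v : 'cV[C]_N) :
  \tr (M *m (v *m adj v)) = \sum_i \sum_j M i j * (v j 0 * (v i 0)^*).
Proof.
apply: eq_bigr => i _; rewrite mxE; apply: eq_bigr => j _.
by rewrite !mxE big_ord1 !mxE.
Qed.

Lemma mxtrace_proj0 n (v : 'cV[C]_(2 ^ n)) :
  \tr (tpow (proj0 R) n *m (v *m adj v)) = (prob_zeros v)%:C.
Proof.
rewrite mxtrace_mul_rank1.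
under eq_bigr => i _ do under eq_bigr => j _ do rewrite tpow_proj0 -mulrA.
under eq_bigr => i _ do rewrite -mulr_sumr sum_delta.
by rewrite sum_delta mulcJ.
Qed.

Lemma mxtrace_proj1 n (v : 'cV[C]_(2 ^ n)) :
  \tr (tpow (proj1 R) n *m (v *m adj v)) = (prob_ones v)%:C.
Proof.
rewrite mxtrace_mul_rank1.
under eq_bigr => i _ do under eq_bigr => j _ do rewrite tpow_proj1 -mulrA.
under eq_bigr => i _ do rewrite -mulr_sumr sum_delta.
by rewrite sum_delta mulcJ.
Qed.

Lemma Im_mulcJ_swap (x y : C) : complex.Im (x * y^*) = - complex.Im (y * x^*).
Proof. by case: x y => a b [c d] /=; ring. Qed.

Lemma mxtrace_sigma_x n (v : 'cV[C]_(2 ^ n)) :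
  \tr (tpow (sigma_x R) n *m (v *m adj v)) = (expX v)%:C.
Proof.
rewrite mxtrace_mul_rank1.
under eq_bigr => i _ do under eq_bigr => j _ do rewrite tpow_sigma_x.
under eq_bigr => i _ do rewrite sum_delta.
apply/eqP; rewrite eq_complex raddf_sum eqxx /=; apply/eqP.
set s := \sum_i _; have s_opp : complex.Im s = - complex.Im s.
  rewrite /s {1}(reindex_inj rev_ord_inj) 2!raddf_sum -sumrN; apply: eq_bigr => i _.
  by rewrite rev_ordK; apply: Im_mulcJ_swap.
lra.
Qed.

Definition objective_re alpha n1 n2 (a : 'cV[C]_(2 ^ n1)) (b : 'cV[C]_(2 ^ n2)) : R :=
  alpha * (prob_zeros a * prob_zeros b + prob_ones a * prob_ones b) + expX a * expX b.

Lemma objectiveE alpha n1 n2 (a : 'cV[C]_(2 ^ n1)) (b : 'cV[C]_(2 ^ n2)) :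
  objective alpha a b = (objective_re alpha a b)%:C.
Proof.
rewrite /objective; set e := expnD_2 n1 n2.
have -> : castmx (e, e) (alpha%:C *: MZ R (n1 + n2) + MX R (n1 + n2)) =
    alpha%:C *: (castmx (e, e) (tpow (proj0 R) (n1 + n2))
                 + castmx (e, e) (tpow (proj1 R) (n1 + n2)))
    + castmx (e, e) (tpow (sigma_x R) (n1 + n2)).
  by apply/matrixP => k l; rewrite !(castmxE, mxE).
rewrite /e (tpowD kron_pattern_zeros isT (@proj0E)) (tpowD kron_pattern_ones isT (@proj1E)).
rewrite (tpowD kron_pattern_antidiag isT (@sigma_xE)).
rewrite mulmxDl -scalemxAl mulmxDl !tensmx_mul mxtraceD mxtraceZ mxtraceD !mxtrace_tens.
rewrite !mxtrace_proj0 !mxtrace_proj1 !mxtrace_sigma_x.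
by rewrite -!rmorphM -!rmorphD -rmorphM -rmorphD.
Qed.

Lemma unit_vecE N (v : 'cV[C]_N) : unit_vec v <-> \sum_i sqnormc (v i 0) = 1.
Proof.
rewrite /unit_vec; have -> : adj v *m v = ((\sum_i sqnormc (v i 0))%:C)%:M.
  apply/matrixP => x y; rewrite !ord1 !mxE eqxx mulr1n rmorph_sum.
  by apply: eq_bigr => i _; rewrite !mxE mulrC mulcJ.
split => [/(congr1 (fun M : 'M_1 => M 0 0))|->]; last by rewrite rmorph1.
by rewrite !mxE eqxx mulr1n => /complexI.
Qed.

Definition inner_mass n (v : 'cV[C]_(2 ^ n)) : R :=
  \sum_(i | inner_index i) sqnormc (v i 0).

Lemma sum_sqnormc_split n (v : 'cV[C]_(2 ^ n)) : (0 < n)%N ->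
  \sum_i sqnormc (v i 0) = prob_zeros v + prob_ones v + inner_mass v.
Proof.
move=> n_gt0; rewrite (bigD1 (ord_zeros n)) //= (bigD1 (ord_ones n)) /=.
  by rewrite addrA.
by rewrite ord_ones_neq_zeros.
Qed.

Definition pairX (x y : C) : R := complex.Re (y * x^*) + complex.Re (x * y^*).

Lemma expX_split n (v : 'cV[C]_(2 ^ n)) : (0 < n)%N ->
  expX v = pairX (v (ord_zeros n) 0) (v (ord_ones n) 0)
           + \sum_(i | inner_index i) complex.Re (v (rev_ord i) 0 * (v i 0)^*).
Proof.
move=> n_gt0; rewrite /expX (bigD1 (ord_zeros n)) //= (bigD1 (ord_ones n)) /=.
  by rewrite addrA /ord_ones rev_ordK.
by rewrite ord_ones_neq_zeros.
Qed.

Lemma Re_mulcJ_le (x y : C) :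
  `|complex.Re (x * y^*)| <= (sqnormc x + sqnormc y) / 2.
Proof.
case: x y => a b [c d]; rewrite /sqnormc /= ler_norml.
have := sqr_ge0 (a + c); have := sqr_ge0 (b + d).
have := sqr_ge0 (a - c); have := sqr_ge0 (b - d).
by move=> *; apply/andP; split; lra.
Qed.

Lemma pairX_sqr_le (x y : C) : pairX x y ^+ 2 <= 4 * sqnormc x * sqnormc y.
Proof.
case: x y => a b [c d]; rewrite /pairX /sqnormc /=.
by have := sqr_ge0 (a * d - b * c); nra.
Qed.

Lemma pairX_norm_le (x y : C) : `|pairX x y| <= sqnormc x + sqnormc y.
Proof.
apply: le_trans (ler_normD _ _) _.
by have := Re_mulcJ_le y x; have := Re_mulcJ_le x y; lra.
Qed.

Lemma inner_expX_le n (v : 'cV[C]_(2 ^ n)) :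
  `|\sum_(i | inner_index i) complex.Re (v (rev_ord i) 0 * (v i 0)^*)| <= inner_mass v.
Proof.
apply: le_trans (ler_norm_sum _ _ _) _.
apply: le_trans (ler_sum _ (fun i _ => Re_mulcJ_le (v (rev_ord i) 0) (v i 0))) _.
rewrite -mulr_suml big_split /=.
have -> : \sum_(i | inner_index i) sqnormc (v (rev_ord i) 0) = inner_mass v.
  rewrite /inner_mass [RHS](reindex_inj rev_ord_inj).
  by apply: eq_bigl => i; rewrite inner_index_rev.
rewrite -/(inner_mass v); lra.
Qed.

Lemma inner_mass_ge0 n (v : 'cV[C]_(2 ^ n)) : 0 <= inner_mass v.
Proof. by apply: sumr_ge0 => i _; apply: sqnormc_ge0. Qed.

Lemma expX_sqr_le n (v : 'cV[C]_(2 ^ n)) : (0 < n)%N ->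
  expX v ^+ 2 <= 4 * (prob_zeros v + inner_mass v / 2) * (prob_ones v + inner_mass v / 2).
Proof.
move=> n_gt0; rewrite expX_split //.
set T := pairX _ _; set E := \sum_(i | _) _.
have := pairX_sqr_le (v (ord_zeros n) 0) (v (ord_ones n) 0).
have := pairX_norm_le (v (ord_zeros n) 0) (v (ord_ones n) 0).
have := inner_expX_le v; have := inner_mass_ge0 v.
rewrite -/T -/E -/(prob_zeros v) -/(prob_ones v) !ler_norml.
set P := prob_zeros v; set Q := prob_ones v; set r := inner_mass v.
move=> r_ge0 /andP[E_ge E_le] /andP[T_ge T_le] T_sqr.
have TE_le : T * E <= (P + Q) * r by nra.
have EE_le : E ^+ 2 <= r ^+ 2 by nra.
by rewrite sqrrD; lra.
Qed.

Lemma objective_bound (alpha pa qa xa pb qb xb p q : R) :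
  0 <= alpha -> 0 <= pa -> 0 <= qa -> 0 <= p -> 0 <= q ->
  pb <= p ^+ 2 -> qb <= q ^+ 2 -> xb ^+ 2 <= 4 * p ^+ 2 * q ^+ 2 ->
  alpha * (pa * pb + qa * qb) + xa * xb
  <= alpha * (pa * p ^+ 2 + qa * q ^+ 2) + `|xa| * (2 * p * q).
Proof.
move=> alpha_ge0 pa_ge0 qa_ge0 p_ge0 q_ge0 pb_le qb_le xb_le; apply: lerD.
  by apply: ler_wpM2l => //; apply: lerD; apply: ler_wpM2l.
apply: le_trans (ler_norm _) _; rewrite normrM; apply: ler_wpM2l => //.
have pq_ge0 := mulr_ge0 p_ge0 q_ge0.
by rewrite ler_norml; apply/andP; split; nra.
Qed.

Definition ghz n (c0 c1 : C) : 'cV[C]_(2 ^ n) :=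
  \col_i (if i == ord_zeros n then c0 else if i == ord_ones n then c1 else 0).

Lemma ghz_zeros n c0 c1 : ghz n c0 c1 (ord_zeros n) 0 = c0.
Proof. by rewrite mxE eqxx. Qed.

Lemma ghz_ones n c0 c1 : (0 < n)%N -> ghz n c0 c1 (ord_ones n) 0 = c1.
Proof. by move=> n_gt0; rewrite mxE (negbTE (ord_ones_neq_zeros n_gt0)) eqxx. Qed.

Lemma ghz_inner n c0 c1 i : inner_index i -> ghz n c0 c1 i 0 = 0.
Proof. by case/andP => /negbTE ne0 /negbTE ne1; rewrite mxE ne0 ne1. Qed.

Lemma qubit_ghz (c : 'cV[C]_(2 ^ 1)) : c = ghz 1 (c (ord_zeros 1) 0) (c (ord_ones 1) 0).
Proof.
apply/matrixP => i j; rewrite !ord1 mxE.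
by case: i => -[|[|//]] ? /=; congr (c _ 0); apply: val_inj.
Qed.

Lemma sum_sqnormc_ghz n c0 c1 : (0 < n)%N ->
  \sum_i sqnormc (ghz n c0 c1 i 0) = sqnormc c0 + sqnormc c1.
Proof.
move=> n_gt0; rewrite sum_sqnormc_split // /prob_zeros /prob_ones ghz_zeros ghz_ones //.
rewrite /inner_mass big1 ?addr0 // => i /ghz_inner->.
by rewrite /sqnormc /= expr0n addr0.
Qed.

Lemma expX_ghz n c0 c1 : (0 < n)%N -> expX (ghz n c0 c1) = pairX c0 c1.
Proof.
move=> n_gt0; rewrite expX_split // ghz_zeros ghz_ones // big1 ?addr0 // => i /ghz_inner->.
by rewrite rmorph0 mulr0.
Qed.

Lemma objective_re_ghz alpha n1 n2 (a : 'cV[C]_(2 ^ n1)) c0 c1 : (0 < n2)%N ->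
  objective_re alpha a (ghz n2 c0 c1)
  = alpha * (prob_zeros a * sqnormc c0 + prob_ones a * sqnormc c1) + expX a * pairX c0 c1.
Proof.
by move=> n2_gt0; rewrite /objective_re /prob_zeros /prob_ones ghz_zeros ghz_ones ?expX_ghz.
Qed.

Lemma sqnormc_real (x : R) : sqnormc x%:C = x ^+ 2.
Proof. by rewrite /sqnormc /= expr0n addr0. Qed.

Lemma pairX_real (x y : R) : pairX x%:C y%:C = 2 * (x * y).
Proof. by rewrite /pairX /=; ring. Qed.

Lemma objective_re_qubit_lift alpha n1 n2 (a : 'cV[C]_(2 ^ n1)) (c : 'cV[C]_(2 ^ 1)) :
  (0 < n2)%N -> unit_vec c ->
  exists2 b : 'cV[C]_(2 ^ n2), unit_vec b & objective_re alpha a b = objective_re alpha a c.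
Proof.
move=> n2_gt0; rewrite {1}(qubit_ghz c) => /unit_vecE; rewrite sum_sqnormc_ghz // => c_unit.
exists (ghz n2 (c (ord_zeros 1) 0) (c (ord_ones 1) 0)).
  by apply/unit_vecE; rewrite sum_sqnormc_ghz.
by rewrite [in RHS](qubit_ghz c) !objective_re_ghz.
Qed.

Lemma objective_re_le_qubit alpha n1 n2 (a : 'cV[C]_(2 ^ n1)) (b : 'cV[C]_(2 ^ n2)) :
  0 <= alpha -> (0 < n2)%N -> unit_vec b ->
  exists2 c : 'cV[C]_(2 ^ 1), unit_vec c & objective_re alpha a b <= objective_re alpha a c.
Proof.
move=> alpha_ge0 n2_gt0 /unit_vecE; rewrite sum_sqnormc_split // => b_unit.
have := expX_sqr_le b n2_gt0; have := inner_mass_ge0 b.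
set P := prob_zeros b + _; set Q := prob_ones b + _ => r_ge0 Xb_le.
have [Pb_le Qb_le] : prob_zeros b <= P /\ prob_ones b <= Q by rewrite /P /Q; split; lra.
have P_ge0 := le_trans (sqnormc_ge0 _) Pb_le; have Q_ge0 := le_trans (sqnormc_ge0 _) Qb_le.
have PQ_sum : P + Q = 1 by rewrite /P /Q; lra.
pose p := Num.sqrt P; pose q := Num.sqrt Q; pose s : R := (-1) ^+ (expX a < 0)%R.
exists (ghz 1 p%:C (s * q)%:C).
  by apply/unit_vecE; rewrite sum_sqnormc_ghz // !sqnormc_real exprMn sqrr_sign mul1r !sqr_sqrtr.
rewrite objective_re_ghz // !sqnormc_real pairX_real exprMn sqrr_sign mul1r.
have -> : expX a * (2 * (p * (s * q))) = `|expX a| * (2 * p * q) by rewrite /s normrEsign; ring.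
by apply: objective_bound; rewrite ?sqrtr_ge0 ?sqnormc_ge0 ?sqr_sqrtr.
Qed.

End Qubits.

Lemma sup_eq_of_cofinal (R : realType) (A B : set R) :
  (forall x, A x -> exists2 y, B y & x <= y) ->
  (forall y, B y -> exists2 x, A x & y <= x) ->
  sup A = sup B.
Proof.
move=> AB BA; rewrite -sup_down -[RHS]sup_down; congr sup.
apply/seteqP; split => x [y [Ay le_xy]].
  by have [z Bz le_yz] := AB y Ay; exists z; split => //; apply: le_trans le_yz.
by have [z Az le_yz] := BA y Ay; exists z; split => //; apply: le_trans le_yz.
Qed.

Theorem lemma1 (R : realType) (alpha : R) (halpha : 0 < alpha <= 2)
    (n1 n2 : nat) (hn1 : (1 <= n1)%N) (hn2 : (1 <= n2)%N) :
  f alpha n1 n2 = f alpha n1 1.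
Proof.
have alpha_ge0 : 0 <= alpha by case/andP: halpha => /ltW.
apply: sup_eq_of_cofinal => x [a [b [a_unit [b_unit]]]]; rewrite objectiveE => /complexI ->.
  have [c c_unit le_bc] := objective_re_le_qubit a alpha_ge0 hn2 b_unit.
  by exists (objective_re alpha a c) => //; exists a, c; rewrite objectiveE.
have [b' b'_unit eq_b'] := objective_re_qubit_lift alpha a hn2 b_unit.
by exists (objective_re alpha a b'); [exists a, b'; rewrite objectiveE | rewrite eq_b'].
Qed.
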